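(* Let $G$ be a $k$-colorable chordal graph, let $T$ be a clique of $G$ with $k-1\le|T|$, and let $v\in T$. If $\mathcal{C}^c_k(G,T)$ is a $(k-1,k)$-color-complete graph, then $\mathcal{C}^c_k(G,T\setminus\{v\})$ is a $(k-2,k)$-color-complete graph. If $\mathcal{C}^c_k(G,T)$ is a forest that satisfies the injective neighborhood property, then $\mathcal{C}^c_k(G,T\setminus\{v\})$ is a forest that satisfies the injective neighborhood property.
   Context: A chordal graph has no induced cycle of length $>3$. A $k$-coloring of $G$ is a map $\alpha:V(G)\to\{1,\dots,k\}$ with $\alpha(u)\ne\alpha(w)$ for all edges $uw$. $\mathcal{C}_k(G)$ has the $k$-colorings as nodes, adjacent iff they differ on exactly one vertex. For $T\subseteq V(G)$, label each coloring $\gamma$ by $\gamma|_T$. A label component is a maximal set of colorings with the same label inducing a connected subgraph of $\mathcal{C}_k(G)$. The contracted solution graph $\mathcal{C}^c_k(G,T)=(H,\ell)$ has one node $x$ per label component $S_x$, distinct $x,y$ adjacent iff some $\gamma\in S_x,\gamma'\in S_y$ are adjacent in $\mathcal{C}_k(G)$, and $\ell(x)$ the common label on $S_x$. For $1\le m\le k$, a labeled graph $(H,\ell)$ is $(m,k)$-color-complete if there is a set $T$ with $|T|=m$ such that every label is a $k$-coloring of the complete graph on $T$, every such $k$-coloring is the label of exactly one node, and two nodes are adjacent iff their labels differ on exactly one element of $T$. $(H,\ell)$ satisfies the injective neighborhood property if any two distinct neighbors of any node have distinct labels. *)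

From mathcomp Require Import all_boot.
Set Implicit Arguments. Unset Strict Implicit. Unset Printing Implicit Defensive.

Section Defs.
Variable V : finType.
Variable e : rel V.   (* the graph G: e is assumed symmetric and irreflexive *)

Definition induced_cycle (n : nat) (c : 'I_n -> V) : Prop :=
  injective c /\
  forall i j : 'I_n,
    e (c i) (c j) = (val j == (val i).+1 %% n) || (val i == (val j).+1 %% n).

Definition chordal : Prop :=
  forall (n : nat) (c : 'I_n -> V), 3 < n -> ~ induced_cycle c.

Definition clique (T : {set V}) : Prop :=
  forall u w, u \in T -> w \in T -> u != w -> e u w.

(* k-colorings are maps V -> 'I_k (colors {1..k} encoded as 0..k-1) *)
Definition is_coloring (k : nat) (g : {ffun V -> 'I_k}) : Prop :=
  forall u w, e u w -> g u != g w.

Definition k_colorable (k : nat) : Prop := exists g : {ffun V -> 'I_k}, is_coloring g.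

Definition recol_adj (k : nat) (g g' : {ffun V -> 'I_k}) : bool :=
  #|[set x | g x != g' x]| == 1.

(* label of a coloring: its restriction to T, encoded as a partial map *)
Definition restr (k : nat) (T : {set V}) (g : {ffun V -> 'I_k})
  : {ffun V -> option 'I_k} :=
  [ffun u => if u \in T then Some (g u) else None].

Definition same_label_connected (k : nat) (T : {set V})
  (S : {set {ffun V -> 'I_k}}) : Prop :=
  S != set0 /\
  (forall g, g \in S -> is_coloring g) /\
  (forall g g', g \in S -> g' \in S -> restr T g = restr T g') /\
  (forall g g', g \in S -> g' \in S ->
     connect [rel a b | [&& a \in S, b \in S & recol_adj a b]] g g').

Definition label_component (k : nat) (T : {set V})
  (S : {set {ffun V -> 'I_k}}) : Prop :=
  same_label_connected T S /\
  forall S', same_label_connected T S' -> S \subset S' -> S' = S.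

(* The contracted solution graph C^c_k(G,T) = (H, l):
   nodes are the label components, *)
Definition csg_node (k : nat) (T : {set V}) (S : {set {ffun V -> 'I_k}}) : Prop :=
  label_component T S.

Definition csg_adj (k : nat) (S S' : {set {ffun V -> 'I_k}}) : Prop :=
  S != S' /\ exists g g', [/\ g \in S, g' \in S' & recol_adj g g'].

Definition csg_lab (k : nat) (T : {set V}) (S : {set {ffun V -> 'I_k}})
  : {ffun V -> option 'I_k} :=
  match [pick g in S] with
  | Some g => restr T g
  | None => [ffun => None]
  end.

Section Labeled.
Variables (N : Type) (node : N -> Prop) (adj : N -> N -> Prop).
Variable k : nat.
Variable lab : N -> {ffun V -> option 'I_k}.

(* f is a k-coloring of the complete graph on T' (as a partial map with
   domain exactly T') *)
Definition clique_coloring (T' : {set V}) (f : {ffun V -> option 'I_k}) : Prop :=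
  (forall u, (f u != None) = (u \in T')) /\
  (forall u w, u \in T' -> w \in T' -> u != w -> f u != f w).

Definition color_complete (m : nat) : Prop :=
  exists T' : {set V}, #|T'| = m /\
    (forall x, node x -> clique_coloring T' (lab x)) /\
    (forall f, clique_coloring T' f -> exists! x, node x /\ lab x = f) /\
    (forall x y, node x -> node y ->
       (adj x y <-> #|[set u in T' | lab x u != lab y u]| = 1)).

Definition forest : Prop :=
  forall (n : nat) (c : 'I_n -> N), 3 <= n -> injective c ->
    (forall i, node (c i)) ->
    ~ (forall i j : 'I_n, val j = (val i).+1 %% n -> adj (c i) (c j)).

Definition inj_nbhd : Prop :=
  forall x y z, node x -> node y -> node z -> adj x y -> adj x z -> y <> z ->
    lab y != lab z.
End Labeled.
End Defs.

(* Removing v from the clique T glues together label components of C_k(G,T)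
   that differ only in the colour of v.  If |T| = k, the colours on T are all k
   colours, so no recolouring step changes them and C^c_k(G,T\{v}) has no edges.
   If |T| = k-1, the colours on T\{v} leave exactly two colours for v.  A
   labelling of T\{v} then extends to T with any free colour for v, and two
   components for T whose labels differ only at v are adjacent; this transfers
   colour-completeness.  Injectivity of neighbourhoods for T forces every
   component for T\{v} to consist of at most two components for T joined by an
   edge recolouring v, so a cycle, or two equally labelled neighbours, for
   T\{v} lifts to one for T. *)

From mathcomp Require Import all_boot zify.
Set Implicit Arguments. Unset Strict Implicit. Unset Printing Implicit Defensive.

Section Restrictions.
Variables (V : finType) (k : nat).
Implicit Types (X Y : {set V}) (a b : {ffun V -> 'I_k}).

Lemma recol_adj_sym : symmetric (@recol_adj V k).
Proof.
by move=> a b; rewrite /recol_adj; congr (_ == _); apply: eq_card => x; rewrite !inE eq_sym.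
Qed.

Lemma recol_adj_diff a b :
  recol_adj a b -> exists u, a u != b u /\ forall w, w != u -> a w = b w.
Proof.
case/cards1P => u /setP Eu; exists u; split=> [|w]; first by move: (Eu u); rewrite !inE eqxx.
by move: (Eu w); rewrite !inE => Ew wu; apply/eqP; rewrite -[_ == _]negbK Ew wu.
Qed.

Lemma restr_eqP X a b :
  restr X a = restr X b <-> {in X, a =1 b}.
Proof.
split=> [/ffunP rab u uX | ab]; first by move: (rab u); rewrite !ffunE uX => -[].
by apply/ffunP => u; rewrite !ffunE; case: ifP => // /ab ->.
Qed.

Lemma restr_subset X Y a b : Y \subset X -> restr X a = restr X b -> restr Y a = restr Y b.
Proof. by move=> sYX /restr_eqP ab; apply/restr_eqP => u /(subsetP sYX); apply: ab. Qed.

Lemma restr_diff_set X a b :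
  [set w in X | restr X a w != restr X b w] = [set w in X | a w != b w].
Proof. by apply/setP => w; rewrite !inE !ffunE; case: (w \in X). Qed.

Lemma recol_vertex_in X a b u :
  (forall w, w != u -> a w = b w) -> restr X a != restr X b -> u \in X.
Proof.
move=> ab; apply: contraNT => uX; apply/eqP/restr_eqP => w wX; apply: ab.
by apply: contraNneq uX => <-.
Qed.

End Restrictions.

Section LabelComponents.
Variables (V : finType) (e : rel V) (k : nat).
Local Notation col := {ffun V -> 'I_k}.
Implicit Types (X Y : {set V}) (a b g h : col) (S : {set col}).

Definition coloringb g : bool := [forall u, forall w, e u w ==> (g u != g w)].

Lemma coloringP g : reflect (is_coloring e g) (coloringb g).
Proof.
apply: (iffP forallP) => [cg u w euw | cg u]; first by move/forallP/(_ w): (cg u); rewrite euw.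
by apply/forallP => w; apply/implyP; apply: cg.
Qed.

Definition label_step X : rel col :=
  fun a b => [&& coloringb a, coloringb b, restr X a == restr X b & recol_adj a b].

Local Notation label_conn X := (connect (label_step X)).

Definition label_comp X g : {set col} := [set h | label_conn X g h].

Lemma label_step_sym X : symmetric (label_step X).
Proof. by move=> a b; rewrite /label_step recol_adj_sym eq_sym; do 2 case: coloringb. Qed.

Lemma label_conn_sym X : connect_sym (label_step X).
Proof. exact/sym_connect_sym/label_step_sym. Qed.

Lemma label_conn_restr X a b :
  coloringb a -> label_conn X a b -> coloringb b /\ restr X a = restr X b.
Proof.
move=> ca ab; pose P := [pred h | coloringb h && (restr X h == restr X a)].
have closedP : closed (label_step X) P.
  move=> x y /and4P [cx cy /eqP rxy _]; by rewrite !inE cx cy rxy.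
have : b \in P by rewrite -(closed_connect closedP ab) inE ca eqxx.
by rewrite inE => /andP [cb /eqP].
Qed.

Lemma label_conn1 X a b :
  coloringb a -> coloringb b -> restr X a = restr X b -> recol_adj a b -> label_conn X a b.
Proof. by move=> ca cb rab ab; apply: connect1; rewrite /label_step ca cb rab eqxx. Qed.

Lemma label_conn_subset X Y a b : Y \subset X -> label_conn X a b -> label_conn Y a b.
Proof.
move=> sYX; apply: connect_sub => x y /and4P [cx cy /eqP rxy xy].
exact: label_conn1 (restr_subset sYX rxy) xy.
Qed.

Lemma label_conn_bridge X a a' b b' :
  label_conn X a a' -> label_conn X b b' -> label_conn X a' b' -> label_conn X a b.
Proof.
move=> aa' bb' a'b'; apply: connect_trans aa' _; rewrite label_conn_sym.
by apply: connect_trans bb' _; rewrite label_conn_sym.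
Qed.

Lemma label_comp_refl X g : g \in label_comp X g.
Proof. by rewrite inE connect0. Qed.

Lemma eq_label_comp X a b : (label_comp X a == label_comp X b) = label_conn X a b.
Proof.
apply/eqP/idP => [Eab | ab]; first by have := label_comp_refl X b; rewrite -Eab inE.
apply/setP => x; rewrite !inE; apply/idP/idP; last exact: connect_trans.
by apply: connect_trans; rewrite label_conn_sym.
Qed.

Lemma same_label_connected_sub X S g :
  same_label_connected e X S -> g \in S -> S \subset label_comp X g.
Proof.
move=> [_ [cS [lS cnS]]] gS; apply/subsetP => h hS; rewrite inE.
apply: connect_sub (cnS g h gS hS) => x y /and3P [xS yS xy].
by apply: label_conn1 (lS x y xS yS) xy; apply/coloringP; apply: cS.
Qed.

Lemma same_label_connected_comp X g :
  coloringb g -> same_label_connected e X (label_comp X g).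
Proof.
move=> cg; split; first by apply/set0Pn; exists g; apply: label_comp_refl.
split; first by move=> h; rewrite inE => /(label_conn_restr cg) [/coloringP].
split.
  by move=> h h'; rewrite !inE => /(label_conn_restr cg) [_ <-] /(label_conn_restr cg) [_ <-].
suff comp_conn h : h \in label_comp X g ->
    connect [rel a b | [&& a \in label_comp X g, b \in label_comp X g & recol_adj a b]] g h.
  move=> h h' /comp_conn gh /comp_conn gh'; apply: connect_trans gh'.
  rewrite (sym_connect_sym _) // => x y /=; rewrite recol_adj_sym.
  by do 2 case: (_ \in _).
rewrite inE => /connectP [p gp ->]; apply/connectP; exists p => //.
have inS : all [in label_comp X g] (g :: p).
  by apply/allP => x /(path_connect gp); rewrite inE.
apply: sub_in_path inS gp => x y xS yS /and4P [_ _ _ xy] /=.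
by rewrite xS yS xy.
Qed.

Lemma csg_nodeP X S : csg_node e X S <-> exists2 g, coloringb g & S = label_comp X g.
Proof.
split=> [[slcS maxS] | [g cg ->]].
  case: (slcS) => /set0Pn [g gS] [cS _]; have cg : coloringb g by apply/coloringP/cS.
  exists g => //; apply/esym/maxS; first exact: same_label_connected_comp.
  exact: same_label_connected_sub.
split=> [|S' slcS' sub]; first exact: same_label_connected_comp.
apply/eqP; rewrite eqEsubset sub andbT.
exact: same_label_connected_sub slcS' (subsetP sub _ (label_comp_refl X g)).
Qed.

Lemma csg_node_comp X g : coloringb g -> csg_node e X (label_comp X g).
Proof. by move=> cg; apply/csg_nodeP; exists g. Qed.

Lemma csg_node_mem X S g :
  csg_node e X S -> g \in S -> coloringb g /\ S = label_comp X g.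
Proof.
case/csg_nodeP => g0 cg0 ->; rewrite inE => g0g.
by split; [case: (label_conn_restr cg0 g0g) | apply/eqP; rewrite eq_label_comp].
Qed.

Lemma csg_lab_comp X g : coloringb g -> csg_lab X (label_comp X g) = restr X g.
Proof.
move=> cg; rewrite /csg_lab; case: pickP => [h | /(_ g)]; last by rewrite label_comp_refl.
by rewrite inE => /(label_conn_restr cg) [_ ->].
Qed.

Lemma csg_adj_compP X a b :
  csg_adj (label_comp X a) (label_comp X b) <->
  ~~ label_conn X a b /\
  exists a' b', [/\ label_conn X a a', label_conn X b b' & recol_adj a' b'].
Proof.
rewrite /csg_adj eq_label_comp; split=> -[nab [a' [b' [aa' bb' ab']]]];
  by split=> //; exists a', b'; move: aa' bb' ab'; rewrite !inE.
Qed.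

Lemma csg_adj_comp_card1 X a b :
  coloringb a -> coloringb b -> csg_adj (label_comp X a) (label_comp X b) ->
  #|[set w in X | a w != b w]| = 1.
Proof.
move=> ca cb /csg_adj_compP [nab [a' [b' [aa' bb' ab']]]].
have [u [a'b'u a'b'w]] := recol_adj_diff ab'.
have [ca' /restr_eqP a_a'] := label_conn_restr ca aa'.
have [cb' /restr_eqP b_b'] := label_conn_restr cb bb'.
have uX : u \in X.
  apply: recol_vertex_in a'b'w _; apply: contraNneq nab => a'b'.
  exact: label_conn_bridge aa' bb' (label_conn1 ca' cb' a'b' ab').
apply/eqP/cards1P; exists u; apply/setP => w; rewrite !inE.
have [-> | wu] := eqVneq w u; first by rewrite uX a_a' // b_b' // a'b'u.
by case: (boolP (w \in X)) => //= wX; rewrite a_a' // b_b' // a'b'w // eqxx.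
Qed.

Lemma csg_adj_choice n (c : nat -> {set col}) (s : nat -> nat) : 0 < n ->
  (forall i, i < n -> csg_adj (c i) (c (s i))) ->
  exists x y : nat -> col,
    forall i, i < n -> [/\ x i \in c i, y i \in c (s i) & recol_adj (x i) (y i)].
Proof.
move=> n_gt0 cadj; have [_ [g0 [g0' _]]] := cadj 0 n_gt0.
pose P i (p : col * col) := [&& p.1 \in c i, p.2 \in c (s i) & recol_adj p.1 p.2].
pose xy i := odflt (g0, g0') [pick p | P i p].
exists (fun i => (xy i).1), (fun i => (xy i).2) => i ilt; apply/and3P; rewrite /xy.
case: pickP => // noP; have [_ [g [g' [gi g's gg']]]] := cadj i ilt.
by move: (noP (g, g')); rewrite /P /= gi g's gg'.
Qed.

Definition csg_adjb S S' : bool :=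
  (S != S') && [exists g in S, exists g' in S', recol_adj g g'].

Lemma csg_adjbP S S' : reflect (csg_adj S S') (csg_adjb S S').
Proof.
apply: (iffP andP) => -[neq adj]; split=> //.
  by case/exists_inP: adj => g gS /exists_inP [g' g'S gg']; exists g, g'.
by case: adj => g [g' [gS g'S gg']]; apply/exists_inP; exists g => //; apply/exists_inP; exists g'.
Qed.

Lemma csg_adjb_comp X a b a' b' : label_comp X a != label_comp X b ->
  label_conn X a a' -> label_conn X b b' -> recol_adj a' b' ->
  csg_adjb (label_comp X a) (label_comp X b).
Proof.
rewrite eq_label_comp => nab aa' bb' ab'.
by apply/csg_adjbP/csg_adj_compP; split=> //; exists a', b'.
Qed.

End LabelComponents.

Notation label_conn e X := (connect (label_step e X)).

Section Cliques.
Variables (V : finType) (e : rel V) (k : nat).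
Implicit Types (X Y : {set V}) (g h : {ffun V -> 'I_k}).

Lemma clique_subset X Y : Y \subset X -> clique e X -> clique e Y.
Proof. by move=> sYX cX u w uY wY; apply: cX; apply: (subsetP sYX). Qed.

Lemma clique_coloring_neq X g u w :
  clique e X -> coloringb e g -> u \in X -> w \in X -> u != w -> g u != g w.
Proof. by move=> cX /coloringP cg uX wX uw; apply/cg/cX. Qed.

Lemma card_imset_clique X g : clique e X -> coloringb e g -> #|g @: X| = #|X|.
Proof.
move=> cX cg; apply: card_in_imset => u w uX wX guw; apply/eqP.
by apply: contraTT (clique_coloring_neq cX cg uX wX) _; rewrite guw eqxx.
Qed.

Lemma card_clique_le X g : clique e X -> coloringb e g -> #|X| <= k.
Proof.
move=> cX cg; rewrite -(card_imset_clique cX cg).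
by apply: leq_trans (max_card _) _; rewrite card_ord.
Qed.

Lemma clique_coloring_restr X g :
  clique e X -> coloringb e g -> clique_coloring X (restr X g).
Proof.
move=> cX cg; split=> [u | u w uX wX uw]; rewrite !ffunE; first by case: ifP.
by rewrite uX wX (inj_eq (@Some_inj _)); apply: (clique_coloring_neq cX).
Qed.

Lemma recolored_color_notin X g h u : clique e X -> coloringb e h -> u \in X ->
  g u != h u -> (forall w, w != u -> g w = h w) -> h u \notin g @: X.
Proof.
move=> cX ch uX ghu gh; apply/imsetP => -[w wX huw].
have [wu | wu] := eqVneq w u; first by rewrite huw wu eqxx in ghu.
by move: (clique_coloring_neq cX ch uX wX); rewrite huw gh // eqxx eq_sym => /(_ wu).
Qed.

End Cliques.

Lemma exists_notin_card_lt (T : finType) (A : {set T}) : #|A| < #|T| -> exists x, x \notin A.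
Proof.
move=> ltAT; have : 0 < #|~: A| by rewrite cardsCs setCK; lia.
by case/card_gt0P => x; rewrite inE; exists x.
Qed.

Lemma notin_card_add2_eq (T : finType) (A : {set T}) p q r : #|A| + 2 = #|T| ->
  p \notin A -> q \notin A -> r \notin A -> p != r -> q != r -> p = q.
Proof.
move=> cardA pA qA rA pr qr.
have /cards2P [x [y [_ EC]]] : #|~: A| == 2 by rewrite cardsCs setCK; apply/eqP; lia.
have : [/\ p \in ~: A, q \in ~: A & r \in ~: A] by rewrite !inE pA qA rA.
rewrite EC !inE => -[/orP [] /eqP Ep /orP [] /eqP Eq /orP [] /eqP Er];
  by subst; rewrite ?eqxx in pr qr *.
Qed.

Lemma succ_modn_inj n i j : i < n -> j < n -> i.+1 %% n = j.+1 %% n -> i = j.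
Proof.
move=> ilt jlt E; have : i + 1 == j + 1 %[mod n] by rewrite !addn1 E.
by rewrite eqn_modDr !modn_small // => /eqP.
Qed.

Lemma succ_modn_neq n i : 1 < n -> i < n -> i.+1 %% n != i.
Proof.
move=> n_gt1 ilt; apply/eqP => E.
have : i + 1 == i + 0 %[mod n] by rewrite addn1 addn0 E modn_small.
by rewrite eqn_modDl mod0n modn_small.
Qed.

Lemma forest_of_nat_cycles (N : Type) (node : N -> Prop) (adj : N -> N -> Prop) :
  (forall n (c : nat -> N), 3 <= n -> {in gtn n &, injective c} ->
     (forall i, i < n -> node (c i)) -> (forall i, i < n -> adj (c i) (c (i.+1 %% n))) ->
     False) ->
  forest node adj.
Proof.
move=> no_cycle [//|n'] c n3 cinj cnode cadj.
apply: (no_cycle n'.+1 (fun i => c (inord i))) => // [i j ilt jlt /cinj | i ilt].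
  by move/(congr1 val); rewrite /= !inordK.
by apply: cadj; rewrite /= !inordK // ltn_pmod.
Qed.

Lemma forest_edgeless (N : Type) (node : N -> Prop) (adj : N -> N -> Prop) :
  (forall x y, node x -> node y -> ~ adj x y) -> forest node adj.
Proof.
move=> no_adj n c n3 _ cnode cadj; have n_gt0 : 0 < n by lia.
exact: no_adj (cnode _) (cnode _) (cadj (Ordinal n_gt0) (Ordinal (ltn_pmod 1 n_gt0)) erefl).
Qed.

Section Forests.
Variables (N : eqType) (node : N -> Prop) (adj : N -> N -> Prop) (r : rel N).
Hypothesis forest_adj : forest node adj.
Hypothesis r_adj : forall x y, r x y -> adj x y.

Lemma forest_acyclic s :
  3 <= size s -> uniq s -> {in s, forall x, node x} -> ~~ cycle r s.
Proof.
case: s => [//|x0 s'] s3 us nodes; apply/negP => cs; set s := x0 :: s' in s3 us nodes cs.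
apply: (forest_adj (c := fun i : 'I_(size s) => nth x0 s i) s3).
- by move=> i j /eqP; rewrite nth_uniq // => /eqP /val_inj.
- by move=> i; apply/nodes/mem_nth.
move=> i j ij; apply: r_adj; move: cs; rewrite (cycle_path x0) => /(pathP x0) rs.
have [lt_i1 | ge_i1] := ltnP i.+1 (size s).
  by move: (rs j); rewrite ij modn_small //; apply.
have -> : nat_of_ord i = (size s).-1 by have := ltn_ord i; lia.
have -> : nat_of_ord j = 0.
  by rewrite ij (_ : i.+1 = size s) ?modnn //; have := ltn_ord i; lia.
move: (rs 0 isT); rewrite /= -(nth_last x0) /s.
by case: (s') s3.
Qed.

Lemma uniq_flatten_disjoint (I : eqType) (blk : I -> seq N) (l : seq I) :
  uniq l -> {in l, forall i, uniq (blk i)} ->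
  {in l &, forall i j x, x \in blk i -> x \in blk j -> i = j} ->
  uniq (flatten [seq blk i | i <- l]).
Proof.
elim: l => [//|i l IH] /= /andP [il ul] ub disj.
rewrite cat_uniq ub ?mem_head //= IH //; first last.
- by move=> j1 j2 j1l j2l; apply: disj; rewrite inE ?j1l ?j2l orbT.
- by move=> j jl; apply: ub; rewrite inE jl orbT.
rewrite andbT; apply/hasPn => x /flatten_mapP [j jl xj]; apply/negP => xi.
have ij : i = j by apply: (disj i j _ _ x) => //; rewrite inE ?eqxx ?jl ?orbT.
by rewrite ij jl in il.
Qed.

Variables (n : nat) (hd : nat -> N) (tl : nat -> seq N).
Local Notation blk i := (hd i :: tl i).
Hypothesis n_ge3 : 3 <= n.
Hypothesis path_blk : forall i, i < n -> path r (hd i) (tl i).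
Hypothesis link_blk : forall i, i < n -> r (last (hd i) (tl i)) (hd (i.+1 %% n)).
Hypothesis uniq_blk : forall i, i < n -> uniq (blk i).
Hypothesis disjoint_blk :
  forall i j x, i < n -> j < n -> x \in blk i -> x \in blk j -> i = j.
Hypothesis node_blk : forall i x, i < n -> x \in blk i -> node x.

Let path_flatten_blk m j x : j + m <= n -> (0 < m -> r x (hd j)) ->
  path r x (flatten [seq blk i | i <- iota j m]).
Proof.
elim: m j x => [//|m IH] j x jm rx /=.
rewrite cat_path rx // path_blk /=; last lia.
apply: IH => [|m_gt0]; first lia.
by rewrite -[j.+1](@modn_small _ n) ?link_blk; lia.
Qed.

Lemma forest_no_block_cycle : False.
Proof.
pose s := flatten [seq blk i | i <- iota 0 n].
have size_s : n <= size s.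
  rewrite /s -[n in n <= _](size_iota 0); elim: (iota 0 n) => //= i l IHl.
  by rewrite size_cat /=; lia.
have uniq_s : uniq s.
  apply: uniq_flatten_disjoint; first exact: iota_uniq.
    by move=> i; rewrite mem_iota => /andP [_ /uniq_blk].
  by move=> i j; rewrite !mem_iota /= => in_ jn x; apply: disjoint_blk.
have node_s : {in s, forall x, node x}.
  by move=> x /flatten_mapP [i]; rewrite mem_iota /=; apply: node_blk.
move/negP: (forest_acyclic (leq_trans n_ge3 size_s) uniq_s node_s); apply.
rewrite (cycle_path (hd 0)).
have -> : last (hd 0) s = last (hd n.-1) (tl n.-1).
  have n_gt0 : 0 < n by lia.
  rewrite /s -[n in iota 0 n](prednK n_gt0) -addn1 iotaD map_cat flatten_cat.
  by rewrite last_cat /= cats0.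
apply: path_flatten_blk => // _.
by have := link_blk (i := n.-1); rewrite prednK ?modnn; [apply; lia | lia].
Qed.

End Forests.

Section RemoveVertex.
Variables (V : finType) (e : rel V) (k : nat) (T : {set V}) (v : V).
Hypotheses (cliqueT : clique e T) (vT : v \in T).
Local Notation col := {ffun V -> 'I_k}.
Local Notation T0 := (T :\ v).
Local Notation coloringb := (coloringb e).
Local Notation label_conn X := (label_conn e X).
Local Notation label_comp := (label_comp e).
Implicit Types (a b g h x y z : col) (S : {set col}) (c : 'I_k) (f : {ffun V -> option 'I_k}).

Lemma clique_setD1 : clique e T0.
Proof. exact: clique_subset (subsetDl _ _) cliqueT. Qed.

Lemma restr_setD1 a b : restr T a = restr T b -> restr T0 a = restr T0 b.
Proof. exact: restr_subset (subsetDl _ _). Qed.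

Lemma label_conn_setD1 a b : label_conn T a b -> label_conn T0 a b.
Proof. exact: label_conn_subset (subsetDl _ _). Qed.

Lemma restr_v a b : restr T a = restr T b -> a v = b v.
Proof. by move/restr_eqP; apply. Qed.

Lemma restr_setD1_ext a b : restr T0 a = restr T0 b -> a v = b v -> restr T a = restr T b.
Proof.
move=> /restr_eqP ab abv; apply/restr_eqP => w wT.
by have [-> // | wv] := eqVneq w v; apply: ab; rewrite !inE wv.
Qed.

Lemma color_v_notin_setD1 g a : coloringb g -> restr T0 g = restr T0 a -> g v \notin a @: T0.
Proof.
move=> cg /restr_eqP ga; apply/imsetP => -[w wT0 gvw].
move: (wT0) => /setD1P [wv wT]; rewrite -(ga w wT0) in gvw.
by move: (clique_coloring_neq cliqueT cg vT wT); rewrite eq_sym gvw eqxx => /(_ wv).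
Qed.

Definition extend_label (f : {ffun V -> option 'I_k}) (c : 'I_k) : {ffun V -> option 'I_k} :=
  [ffun w => if w == v then Some c else f w].

Lemma clique_coloring_extend f c :
  clique_coloring T0 f -> (forall u, f u != Some c) -> clique_coloring T (extend_label f c).
Proof.
move=> [fdom finj] fc; split=> [u | u w uT wT uw]; rewrite !ffunE.
  by have [-> | uv] := eqVneq u v; [rewrite vT | rewrite fdom !inE uv].
have [uv | uv] := eqVneq u v; have [wv | wv] := eqVneq w v.
- by rewrite uv wv eqxx in uw.
- by rewrite eq_sym fc.
- exact: fc.
- by apply: finj; rewrite // !inE ?uv ?wv.
Qed.

Lemma restr_setD1_extend g f c :
  clique_coloring T0 f -> restr T g = extend_label f c -> restr T0 g = f.
Proof.
move=> [fdom _] /ffunP gf; apply/ffunP => w; rewrite ffunE.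
case: ifPn => [wT0 | wT0]; last by move: (fdom w); rewrite (negbTE wT0) => /negbFE /eqP ->.
by move: (wT0) (gf w) => /setD1P [wv wT]; rewrite !ffunE wT (negbTE wv).
Qed.

Section FullClique.
Hypothesis cardT : #|T| = k.

Lemma recol_adj_restr_full a b :
  coloringb a -> coloringb b -> recol_adj a b -> restr T a = restr T b.
Proof.
move=> ca cb /recol_adj_diff [u [abu ab]].
have uT : u \notin T.
  apply/negP => uT; have : b u \in a @: T.
    suff -> : a @: T = setT by rewrite inE.
    apply/eqP; rewrite eqEcard subsetT cardsT card_ord.
    by rewrite (card_imset_clique cliqueT ca) cardT leqnn.
  case/imsetP => w wT; have [-> | wu] := eqVneq w u.
    by move/eqP; rewrite eq_sym (negbTE abu).
  rewrite ab // => buw; move: (clique_coloring_neq cliqueT cb uT wT).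
  by rewrite buw eqxx eq_sym => /(_ wu).
by apply/restr_eqP => w wT; apply: ab; apply: contraNneq uT => <-.
Qed.

Lemma csg_setD1_no_adj S S' : csg_node e T0 S -> csg_node e T0 S' -> ~ csg_adj S S'.
Proof.
move=> /csg_nodeP [a ca ->] /csg_nodeP [b cb ->] /csg_adj_compP [nab [a' [b' [aa' bb' ab']]]].
have [ca' _] := label_conn_restr ca aa'; have [cb' _] := label_conn_restr cb bb'.
move/negP: nab; apply; apply: label_conn_bridge aa' bb' (label_conn1 ca' cb' _ ab').
exact/restr_setD1/recol_adj_restr_full.
Qed.

End FullClique.

Section AlmostFullClique.
Hypothesis cardT : #|T| = k.-1.

Lemma card_setD1_add2 : #|T0| + 2 = k.
Proof. by have := cardsD1 v T; rewrite vT cardT /=; lia. Qed.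

Lemma color_v_two_choices a b1 b2 : coloringb a -> coloringb b1 -> coloringb b2 ->
  restr T0 b1 = restr T0 a -> restr T0 b2 = restr T0 a -> a v != b1 v -> a v != b2 v ->
  b1 v = b2 v.
Proof.
move=> ca cb1 cb2 b1a b2a ab1 ab2.
apply: (notin_card_add2_eq (A := a @: T0) (r := a v)); rewrite 1?eq_sym //.
- by rewrite (card_imset_clique clique_setD1 ca) card_setD1_add2 card_ord.
- exact: color_v_notin_setD1.
- exact: color_v_notin_setD1.
- exact: color_v_notin_setD1.
Qed.

Section InjectiveNeighborhood.
Hypothesis injT : inj_nbhd (csg_node e T) (@csg_adj V k) (csg_lab T).

Lemma inj_nbhd_label_conn y1 y2 z1 z2 :
  coloringb y1 -> coloringb z1 -> coloringb z2 -> label_conn T y1 y2 ->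
  recol_adj y1 z1 -> recol_adj y2 z2 -> restr T z1 = restr T z2 ->
  restr T y1 != restr T z1 -> label_conn T z1 z2.
Proof.
move=> cy1 cz1 cz2 y12 yz1 yz2 z12 y1z1.
have not_y1_conn z : restr T y1 != restr T z -> ~~ label_conn T y1 z.
  by apply: contra => /(label_conn_restr cy1) [_ ->].
have adj1 : csg_adj (label_comp T y1) (label_comp T z1).
  apply/csg_adj_compP; split; first exact: not_y1_conn.
  by exists y1, z1; rewrite !connect0.
have adj2 : csg_adj (label_comp T y1) (label_comp T z2).
  apply/csg_adj_compP; split; first by apply: not_y1_conn; rewrite -z12.
  by exists y2, z2; rewrite connect0.
have [/eqP | /eqP ne] := eqVneq (label_comp T z1) (label_comp T z2); first by rewrite eq_label_comp.
have := injT (csg_node_comp T cy1) (csg_node_comp T cz1) (csg_node_comp T cz2) adj1 adj2 ne.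
by rewrite !csg_lab_comp // z12 eqxx.
Qed.

Definition v_edge_conn a y := exists a' b',
  [/\ label_conn T a a', label_conn T b' y, recol_adj a' b' & a' v != b' v].

Lemma v_edge_conn_step a y z : coloringb a -> label_conn T0 a y -> label_step e T0 y z ->
  label_conn T a y \/ v_edge_conn a y -> label_conn T a z \/ v_edge_conn a z.
Proof.
move=> ca ay yz; have [cy ay0] := label_conn_restr ca ay.
case/and4P: (yz) => _ cz /eqP yz0 adj_yz.
have [yz_T | yz_T] := eqVneq (restr T y) (restr T z).
  have yzT : label_conn T y z by apply: label_conn1.
  case=> [ayT | [a' [b' [aa' b'y a'b' a'b'v]]]]; first by left; apply: connect_trans ayT yzT.
  by right; exists a', b'; split=> //; apply: connect_trans b'y yzT.
have yzv : y v != z v by apply: contra_neq yz_T; apply: restr_setD1_ext.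
case=> [ayT | [a' [b' [aa' b'y a'b' a'b'v]]]].
  by right; exists y, z; rewrite connect0.
left; apply: (connect_trans aa').
have [ca' aa'T] := label_conn_restr ca aa'.
have [cb' yb'] : coloringb b' /\ restr T y = restr T b'.
  by apply: label_conn_restr cy _; rewrite label_conn_sym.
have a'y0 : restr T0 a' = restr T0 y by rewrite -(restr_setD1 aa'T) ay0.
(* The step y -> z gives v the only other colour, that of a'; so a' and z are
   equally labelled neighbours of the node of y. *)
have a'zv : a' v = z v.
  by apply: (@color_v_two_choices y) => //; rewrite (restr_v yb') eq_sym.
apply: (inj_nbhd_label_conn cb' ca' cz b'y _ adj_yz).
- by rewrite recol_adj_sym.
- by apply: restr_setD1_ext; rewrite // a'y0.
- by apply: contra_neq a'b'v => /restr_v ->.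
Qed.

Lemma label_conn_setD1_split a b : coloringb a -> label_conn T0 a b ->
  label_conn T a b \/
  exists a' b', [/\ label_conn T a a', label_conn T b b', recol_adj a' b' & a' v != b' v].
Proof.
move=> ca /connectP [p ap ->].
have lift q y : label_conn T0 a y -> path (label_step e T0) y q ->
    label_conn T a y \/ v_edge_conn a y ->
    label_conn T a (last y q) \/ v_edge_conn a (last y q).
  elim: q y => [//|z q IH] y ay /= /andP [yz zq] Py.
  by apply: IH zq _; [apply: connect_trans ay (connect1 yz) | apply: v_edge_conn_step yz Py].
case: (lift p a (connect0 _ _) ap (or_introl (connect0 _ _))) => [|[a' [b' [aa' b'y ab abv]]]].
  by left.
by right; exists a', b'; split; rewrite // label_conn_sym.
Qed.

Lemma setD1_neighbors_label_conn x1 x2 y1 z2 :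
  coloringb x1 -> coloringb y1 -> coloringb z2 -> label_conn T0 x1 x2 ->
  recol_adj x1 y1 -> recol_adj x2 z2 -> restr T0 x1 != restr T0 y1 ->
  restr T0 y1 = restr T0 z2 -> label_conn T y1 z2.
Proof.
move=> cx1 cy1 cz2 x12 xy1 xz2 x1y1 y1z2.
have [cx2 x12_0] := label_conn_restr cx1 x12.
have [u [xy1u xy1w]] := recol_adj_diff xy1.
have [u2 [_ xz2w]] := recol_adj_diff xz2.
have uT0 : u \in T0 := recol_vertex_in xy1w x1y1.
move: (uT0) => /setD1P [uv uT]; rewrite eq_sym in uv.
have y1z2_u : y1 u = z2 u by move/restr_eqP: y1z2; apply.
have x12_u : x1 u = x2 u by move/restr_eqP: x12_0; apply.
have u2u : u2 = u.
  by apply: contraNeq xy1u => u2u; rewrite x12_u y1z2_u xz2w // eq_sym.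
subst u2.
(* x1 v and x2 v both avoid the colours of x1 on T0 and the colour y1 u = z2 u. *)
have x12v : x1 v = x2 v.
  apply: (notin_card_add2_eq (A := x1 @: T0) (r := y1 u)).
  - by rewrite (card_imset_clique clique_setD1 cx1) card_setD1_add2 card_ord.
  - exact: color_v_notin_setD1.
  - exact: color_v_notin_setD1.
  - exact: recolored_color_notin clique_setD1 cy1 uT0 xy1u xy1w.
  - by rewrite xy1w // (clique_coloring_neq cliqueT cy1 vT uT uv).
  - by rewrite xz2w // y1z2_u (clique_coloring_neq cliqueT cz2 vT uT uv).
have x12T : label_conn T x1 x2.
  case: (label_conn_setD1_split cx1 x12) => // -[a' [b' [x1a' x2b' _ a'b'v]]].
  move: a'b'v; rewrite -(restr_v (label_conn_restr cx1 x1a').2).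
  by rewrite -(restr_v (label_conn_restr cx2 x2b').2) x12v eqxx.
apply: (inj_nbhd_label_conn cx1 cy1 cz2 x12T xy1 xz2).
- by apply: restr_setD1_ext; rewrite // -xy1w // x12v xz2w.
- by apply: contra_neq x1y1 => /restr_setD1.
Qed.

Lemma inj_nbhd_setD1 : inj_nbhd (csg_node e T0) (@csg_adj V k) (csg_lab T0).
Proof.
move=> _ _ _ /csg_nodeP [x cx ->] /csg_nodeP [y cy ->] /csg_nodeP [z cz ->].
move=> /csg_adj_compP [nxy [x1 [y1 [xx1 yy1 xy1]]]] /csg_adj_compP [_ [x2 [z2 [xx2 zz2 xz2]]]].
rewrite !csg_lab_comp // => ne_yz; apply/eqP => yz; apply/ne_yz/eqP; rewrite eq_label_comp.
have [cx1 xx1_0] := label_conn_restr cx xx1; have [cy1 yy1_0] := label_conn_restr cy yy1.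
have [cz2 zz2_0] := label_conn_restr cz zz2.
have x1y1 : restr T0 x1 != restr T0 y1.
  by apply: contraNneq nxy => x1y1; apply: label_conn_bridge xx1 yy1 (label_conn1 _ _ _ _).
have y1z2 : label_conn T y1 z2.
  apply: setD1_neighbors_label_conn cx1 cy1 cz2 _ xy1 xz2 x1y1 _.
    by apply: connect_trans xx2; rewrite label_conn_sym.
  by rewrite -yy1_0 -zz2_0.
exact: label_conn_bridge yy1 zz2 (label_conn_setD1 y1z2).
Qed.

Hypothesis forestT : forest (csg_node e T) (@csg_adj V k).

Section LiftCycle.
Variables (n : nat) (c : nat -> {set col}) (x y : nat -> col).
Local Notation nx i := (i.+1 %% n).
Hypotheses (n_ge3 : 2 < n) (c_inj : {in gtn n &, injective c}).
Hypothesis c_node : forall i, i < n -> csg_node e T0 (c i).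
Hypothesis x_in : forall i, i < n -> x i \in c i.
Hypothesis y_in : forall i, i < n -> y i \in c (nx i).
Hypothesis xy_adj : forall i, i < n -> recol_adj (x i) (y i).

Let nx_lt i : nx i < n.
Proof. by apply: ltn_pmod; lia. Qed.

Let label_comp_cycle_inj i j g h : i < n -> j < n -> g \in c i -> h \in c j ->
  label_comp T g = label_comp T h -> i = j.
Proof.
move=> ilt jlt gi hj /eqP; rewrite eq_label_comp => /label_conn_setD1 gh.
apply: c_inj; rewrite ?inE //.
have [_ ->] := csg_node_mem (c_node ilt) gi; have [_ ->] := csg_node_mem (c_node jlt) hj.
by apply/eqP; rewrite eq_label_comp.
Qed.

(* Block i lists the components for T inside the node c (i+1): the one entered
   through y i and, if different, the one left through x (i+1). *)
Let hd i := label_comp T (y i).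
Let tl i := if hd i == label_comp T (x (nx i)) then [::] else [:: label_comp T (x (nx i))].

Let mem_lift_block i S : i < n -> S \in hd i :: tl i ->
  exists2 g, g \in c (nx i) & coloringb g /\ S = label_comp T g.
Proof.
move=> ilt SP; have [-> | ->] : S = hd i \/ S = label_comp T (x (nx i)).
- move: SP; rewrite inE => /predU1P [-> | ]; first by left.
  by rewrite /tl; case: ifP => // _; rewrite inE => /eqP ->; right.
- exists (y i); first exact: y_in.
  by have [] := csg_node_mem (c_node (nx_lt i)) (y_in ilt).
- exists (x (nx i)); first exact: x_in (nx_lt i).
  by have [] := csg_node_mem (c_node (nx_lt i)) (x_in (nx_lt i)).
Qed.

Lemma lift_cycle : False.
Proof.
apply: (forest_no_block_cycle forestT (r := @csg_adjb V k) (fun S S' => @csg_adjbP V k S S')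
          n_ge3 (hd := hd) (tl := tl)).
- move=> i ilt; rewrite /tl; case: ifPn => //= ne; rewrite andbT.
  have [cy Ey] := csg_node_mem (c_node (nx_lt i)) (y_in ilt).
  have := x_in (nx_lt i); rewrite Ey inE => /(label_conn_setD1_split cy).
  case=> [yxT | [a' [b' [ya' xb' a'b' _]]]]; last exact: csg_adjb_comp ne ya' xb' a'b'.
  by move: ne; rewrite /hd eq_label_comp yxT.
- move=> i ilt; have -> : last (hd i) (tl i) = label_comp T (x (nx i)).
    by rewrite /tl; case: ifP => // /eqP.
  apply: csg_adjb_comp (connect0 _ _) (connect0 _ _) (xy_adj (nx_lt i)).
  apply/eqP => /(label_comp_cycle_inj (nx_lt i) (nx_lt _) (x_in (nx_lt i)) (y_in (nx_lt i))).
  by apply/eqP; rewrite eq_sym succ_modn_neq ?nx_lt //; lia.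
- by move=> i ilt; rewrite /tl; case: ifPn => //= ne; rewrite inE andbT.
- move=> i j S ilt jlt /(mem_lift_block ilt) [g gi [_ ->]] /(mem_lift_block jlt) [h hj [_ gh]].
  exact/succ_modn_inj/(label_comp_cycle_inj (nx_lt i) (nx_lt j) gi hj gh).
- by move=> i S ilt /(mem_lift_block ilt) [g _ [cg ->]]; apply: csg_node_comp.
Qed.

End LiftCycle.

Lemma forest_setD1 : forest (csg_node e T0) (@csg_adj V k).
Proof.
apply: forest_of_nat_cycles => n c n_ge3 c_inj c_node cadj.
have [x [y xyP]] := csg_adj_choice (ltnW (ltnW n_ge3)) cadj.
apply: (lift_cycle n_ge3 c_inj c_node (x := x) (y := y)) => i /xyP [] //.
Qed.

End InjectiveNeighborhood.

Section ColorComplete.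
Hypothesis unique_node : forall f, clique_coloring T f ->
  exists! S, csg_node e T S /\ csg_lab T S = f.
Hypothesis adj_labels : forall S S', csg_node e T S -> csg_node e T S' ->
  (csg_adj S S' <-> #|[set u in T | csg_lab T S u != csg_lab T S' u]| = 1).

Lemma csg_adj_comp_card1P a b : coloringb a -> coloringb b ->
  csg_adj (label_comp T a) (label_comp T b) <-> #|[set w in T | a w != b w]| = 1.
Proof.
move=> ca cb; rewrite -restr_diff_set -(csg_lab_comp T ca) -(csg_lab_comp T cb).
by apply: adj_labels; apply: csg_node_comp.
Qed.

Lemma restr_setD1_label_conn g1 g2 :
  coloringb g1 -> coloringb g2 -> restr T0 g1 = restr T0 g2 -> label_conn T0 g1 g2.
Proof.
move=> c1 c2 g12.
have [g12v | g12v] := eqVneq (g1 v) (g2 v).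
  have [S [_ S_uniq]] := unique_node (clique_coloring_restr cliqueT c1).
  have S_g1 := S_uniq _ (conj (csg_node_comp T c1) (csg_lab_comp T c1)).
  have S_g2 : S = label_comp T g2.
    apply: S_uniq; split; first exact: csg_node_comp.
    by rewrite csg_lab_comp // (restr_setD1_ext g12 g12v).
  have /eqP : label_comp T g1 = label_comp T g2 by rewrite -S_g1.
  by rewrite eq_label_comp; apply: label_conn_setD1.
have : csg_adj (label_comp T g1) (label_comp T g2).
  apply/csg_adj_comp_card1P => //; apply/eqP/cards1P; exists v; apply/setP => w; rewrite !inE.
  have [-> | wv] := eqVneq w v; first by rewrite vT g12v.
  case: (boolP (w \in T)) => //= wT; apply/negbTE; rewrite negbK.
  by move/restr_eqP: g12 => -> //; rewrite !inE wv.
case/csg_adj_compP => _ [a' [b' [g1a' g2b' a'b']]].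
have [ca' g1a'T] := label_conn_restr c1 g1a'; have [cb' g2b'T] := label_conn_restr c2 g2b'.
apply: label_conn_bridge (label_conn_setD1 g1a') (label_conn_setD1 g2b') _.
apply: label_conn1 ca' cb' _ a'b'.
by rewrite -(restr_setD1 g1a'T) -(restr_setD1 g2b'T).
Qed.

Lemma exists_coloring_extend f c : clique_coloring T0 f -> (forall u, f u != Some c) ->
  exists2 g, coloringb g & restr T g = extend_label f c.
Proof.
move=> cf fc.
have [S [[/csg_nodeP [g cg ->] labS] _]] := unique_node (clique_coloring_extend cf fc).
by exists g; rewrite // -(csg_lab_comp T cg).
Qed.

Lemma exists_coloring_setD1 f : clique_coloring T0 f -> exists2 g, coloringb g & restr T0 g = f.
Proof.
move=> cf; have [fdom _] := cf.
pose A := [set c | Some c \in f @: T0].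
have [c cA] : exists c, c \notin A.
  apply: exists_notin_card_lt; rewrite card_ord -(card_imset A (@Some_inj _)).
  apply: leq_ltn_trans (leq_trans (subset_leq_card _) (leq_imset_card f T0)) _.
    by apply/subsetP => o /imsetP [c]; rewrite inE => cf0 ->.
  by have := card_setD1_add2; lia.
have fc u : f u != Some c.
  case: (boolP (u \in T0)) => uT0; last by move: (fdom u); rewrite (negbTE uT0) => /negbFE /eqP ->.
  by apply: contraNneq cA => fuc; rewrite inE -fuc imset_f.
have [g cg gf] := exists_coloring_extend cf fc.
by exists g; last exact: restr_setD1_extend gf.
Qed.

Lemma exists_coloring_recolor_v a c : coloringb a -> c \notin a @: T0 ->
  exists2 a1, coloringb a1 & restr T0 a1 = restr T0 a /\ a1 v = c.
Proof.
move=> ca caT0; have cfa := clique_coloring_restr clique_setD1 ca.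
have a_free w : restr T0 a w != Some c.
  rewrite ffunE; case: ifP => // wT0; rewrite (inj_eq (@Some_inj _)).
  by apply: contraNneq caT0 => <-; rewrite imset_f.
have [a1 ca1 a1a] := exists_coloring_extend cfa a_free.
exists a1 => //; split; first exact: restr_setD1_extend cfa a1a.
by move/ffunP: a1a => /(_ v); rewrite !ffunE vT eqxx => -[].
Qed.

Lemma card1_csg_adj_setD1 a b : coloringb a -> coloringb b ->
  #|[set w in T0 | a w != b w]| = 1 -> csg_adj (label_comp T0 a) (label_comp T0 b).
Proof.
move=> ca cb /eqP/cards1P [u /setP Eu].
have /andP [uT0 abu] : (u \in T0) && (a u != b u) by move: (Eu u); rewrite !inE eqxx.
have ab w : w \in T0 -> w != u -> a w = b w.
  by move=> wT0 wu; apply/eqP; move: (Eu w); rewrite in_set in_set1 wT0 (negbTE wu) => /negbFE.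
have [c] : exists c, c \notin b u |: a @: T0.
  apply: exists_notin_card_lt; rewrite card_ord cardsU1 (card_imset_clique clique_setD1 ca).
  by have := card_setD1_add2; case: (_ \notin _); lia.
rewrite !inE negb_or => /andP [cbu caT0].
have cbT0 : c \notin b @: T0.
  apply/imsetP => -[w wT0 cbw]; have [wu | wu] := eqVneq w u; first by rewrite cbw wu eqxx in cbu.
  by move/imsetP: caT0; apply; exists w; rewrite // ab.
have [a1 ca1 [/restr_eqP a1a a1v]] := exists_coloring_recolor_v ca caT0.
have [b1 cb1 [/restr_eqP b1b b1v]] := exists_coloring_recolor_v cb cbT0.
have : csg_adj (label_comp T a1) (label_comp T b1).
  apply/csg_adj_comp_card1P => //; apply/eqP/cards1P; exists u; apply/setP => w; rewrite !inE.
  have [-> | wv] := eqVneq w v.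
    by rewrite a1v b1v eqxx andbF; apply/esym/eqP => vu; rewrite -vu !inE eqxx in uT0.
  case: (boolP (w \in T)) => //= wT; last first.
    by apply/esym/eqP => wu; rewrite wu (subsetP (subsetDl _ _) _ uT0) in wT.
  have wT0 : w \in T0 by rewrite !inE wv.
  rewrite a1a // b1b //; have [-> | wu] := eqVneq w u; first by rewrite abu.
  by rewrite ab // eqxx.
case/csg_adj_compP => _ [a' [b' [a1a' b1b' a'b']]].
have [ca' /restr_setD1/restr_eqP a1a'0] := label_conn_restr ca1 a1a'.
have [cb' /restr_setD1/restr_eqP b1b'0] := label_conn_restr cb1 b1b'.
apply/csg_adj_compP; split.
  by apply: contraNN abu => /(label_conn_restr ca) [_ /restr_eqP ->].
exists a', b'; split=> //; apply: restr_setD1_label_conn => //; apply/restr_eqP => w wT0.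
- by rewrite -a1a // a1a'0.
- by rewrite -b1b // b1b'0.
Qed.

Lemma color_complete_setD1 :
  color_complete (csg_node e T0) (@csg_adj V k) (csg_lab T0) (k - 2).
Proof.
exists T0; split; first by have := card_setD1_add2; lia.
split.
  move=> _ /csg_nodeP [g cg ->]; rewrite csg_lab_comp //.
  exact: clique_coloring_restr clique_setD1 cg.
split.
  move=> f /exists_coloring_setD1 [g cg gf]; exists (label_comp T0 g); split.
    by split; [apply: csg_node_comp | rewrite csg_lab_comp].
  move=> _ [/csg_nodeP [h ch ->]]; rewrite csg_lab_comp // => hf.
  by apply/eqP; rewrite eq_label_comp; apply: restr_setD1_label_conn; rewrite ?gf.
move=> _ _ /csg_nodeP [a ca ->] /csg_nodeP [b cb ->]; rewrite !csg_lab_comp // restr_diff_set.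
by split; [apply: csg_adj_comp_card1 | apply: card1_csg_adj_setD1].
Qed.

End ColorComplete.

End AlmostFullClique.

End RemoveVertex.

Lemma csg_lab_dom (V : finType) (e : rel V) (k : nat) (T T' : {set V})
    (g : {ffun V -> 'I_k}) :
  coloringb e g ->
  (forall S : {set {ffun V -> 'I_k}}, csg_node e T S -> clique_coloring T' (csg_lab T S)) ->
  T' = T.
Proof.
move=> cg labs; apply/setP => u.
have [dom _] := labs _ (csg_node_comp T cg).
by rewrite -dom csg_lab_comp // ffunE; case: (u \in T).
Qed.

Unset Implicit Arguments. Set Strict Implicit. Set Printing Implicit Defensive.

Theorem lemma7 (V : finType) (e : rel V) (k : nat) :
  symmetric e -> irreflexive e -> chordal e -> k_colorable e k ->
  forall (T : {set V}) (v : V),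
    clique e T -> k.-1 <= #|T| -> v \in T ->
    (color_complete (csg_node e T) (@csg_adj V k) (csg_lab T) k.-1 ->
     color_complete (csg_node e (T :\ v)) (@csg_adj V k) (csg_lab (T :\ v)) (k - 2))
    /\
    (forest (csg_node e T) (@csg_adj V k) /\ inj_nbhd (csg_node e T) (@csg_adj V k) (csg_lab T) ->
     forest (csg_node e (T :\ v)) (@csg_adj V k) /\
     inj_nbhd (csg_node e (T :\ v)) (@csg_adj V k) (csg_lab (T :\ v))).
Proof.
move=> _ _ _ [g /coloringP cg] T v cliqueT ge_T vT.
split=> [ccT | [forestT injT]].
  case: ccT => T' [cardT' [labs [unique_node adj_labels]]].
  have ET' := csg_lab_dom cg labs; subst T'.
  exact: color_complete_setD1 cliqueT vT cardT' unique_node adj_labels.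
have [fullT | almostT] : #|T| = k \/ #|T| = k.-1 by have := card_clique_le cliqueT cg; lia.
  have no_adj := csg_setD1_no_adj (v := v) cliqueT fullT.
  split; first exact: forest_edgeless.
  by move=> S S' S'' nS nS' _ /(no_adj _ _ nS nS').
by split; [apply: forest_setD1 | apply: inj_nbhd_setD1].
Qed.
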